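(* Let $x\ne y$ be nodes in an ADMG $G$. There exist a node $z$ and a set $W$ such that $(\{z\},W)$ is a valid conditional instrumental set relative to $(x,y)$ in $G$ if and only if there exist a node $z'$ and a set $W'\subseteq\mathrm{an}_{\tilde G}(\{y,z'\})$ such that $(\{z'\},W')$ is a valid conditional instrumental set relative to $(x,y)$ in $G$.
   Context: An ADMG $G$ has a finite node set $V$, directed edges $u\to v$ and bidirected edges $u\leftrightarrow v$, with no directed cycle. A walk is a sequence of nodes $v_1,\dots,v_r$ with edges $e_i$ joining $v_i$ and $v_{i+1}$ (nodes may repeat). $\mathrm{de}_G(v)$ ($\mathrm{an}_G(v)$) is the set of nodes reachable from $v$ by a directed path (from which $v$ is reachable by a directed path), including $v$; for sets take unions. A non-endpoint occurrence on a walk is a collider if both incident walk edges have an arrowhead at it, otherwise a non-collider. A walk is open given $W$ if every collider is in $W$ and every non-collider is not in $W$. For disjoint $A,B,W$, $A\not\perp_G B\mid W$ if some walk from $A$ to $B$ is open given $W$, otherwise $A\perp_G B\mid W$. $\mathrm{causal}_G(x,y)=(\mathrm{de}_G(x)\cap\mathrm{an}_G(y))\setminus\{x\}$, $\mathrm{forb}_G(x,y)=\mathrm{de}_G(\mathrm{causal}_G(x,y))\cup\{x\}$, and $\tilde G$ is $G$ with all directed edges $x\to c$, $c\in\mathrm{causal}_G(x,y)$, removed. For pairwise disjoint $\{x,y\},Z,W$, $(Z,W)$ is a valid conditional instrumental set relative to $(x,y)$ in $G$ iff (a) $(Z\cup W)\cap\mathrm{forb}_G(x,y)=\emptyset$,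 (b) $x\not\perp_G Z\mid W$, and (c) $y\perp_{\tilde G} Z\mid W$. *)

From mathcomp Require Import all_boot.
Set Implicit Arguments. Unset Strict Implicit. Unset Printing Implicit Defensive.

Record mgraph (V : finType) := MG { dir : rel V; bid : rel V }.

Section ADMG.
Variable V : finType.

(* ADMG: no directed cycle (including no directed self-loop); bidirected
   edges are symmetric and have no self-loops. *)
Definition is_admg (G : mgraph V) : Prop :=
  [/\ forall u v, dir G u v -> ~~ connect (dir G) v u,
      symmetric (bid G) & irreflexive (bid G)].

(* The kind of edge used by one step of a walk from u to v:
   Fwd : u -> v,   Bwd : u <- v,   Bi : u <-> v. *)
Inductive ekind := Fwd | Bwd | Bi.

Definition edge_ok (G : mgraph V) (u v : V) (k : ekind) : bool :=
  match k with
  | Fwd => dir G u v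
  | Bwd => dir G v u
  | Bi  => bid G u v
  end.

(* arrowhead at the source / target of a step *)
Definition head_src (k : ekind) : bool := if k is Fwd then false else true.
Definition head_tgt (k : ekind) : bool := if k is Bwd then false else true.

(* A walk is a start node a together with a list of steps (v_{i+1}, e_i). *)
Fixpoint walk_ok (G : mgraph V) (u : V) (s : seq (V * ekind)) : bool :=
  if s is (v, k) :: s' then edge_ok G u v k && walk_ok G v s' else true.

(* u is a non-endpoint occurrence reached with arrowhead arr_in at u,
   remaining steps s (nonempty means u is not the last node). *)
Fixpoint open_from (W : {set V}) (arr_in : bool) (u : V)
    (s : seq (V * ekind)) : bool :=
  if s is (v, k) :: s' then
    (if arr_in && head_src k then u \in W else u \notin W)
    && open_from W (head_tgt k) v s'
  else true.

Definition open_walk (W : {set V}) (a : V) (s : seq (V * ekind)) : bool :=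
  if s is (v, k) :: s' then open_from W (head_tgt k) v s' else true.

Definition mconn (G : mgraph V) (A B W : {set V}) : Prop :=
  exists (a : V) (s : seq (V * ekind)),
    [/\ a \in A, walk_ok G a s, last a (unzip1 s) \in B & open_walk W a s].

Definition msep (G : mgraph V) (A B W : {set V}) : Prop := ~ mconn G A B W.

Definition de (G : mgraph V) (v : V) : {set V} := [set u | connect (dir G) v u].
Definition an (G : mgraph V) (v : V) : {set V} := [set u | connect (dir G) u v].
Definition de_set (G : mgraph V) (A : {set V}) : {set V} := \bigcup_(v in A) de G v.
Definition an_set (G : mgraph V) (A : {set V}) : {set V} := \bigcup_(v in A) an G v.

Definition causal (G : mgraph V) (x y : V) : {set V} := (de G x :&: an G y) :\ x.
Definition forb (G : mgraph V) (x y : V) : {set V} := de_set G (causal G x y) :|: [set x].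

Definition tildeG (G : mgraph V) (x y : V) : mgraph V :=
  MG (fun u v => dir G u v && ~~ ((u == x) && (v \in causal G x y))) (bid G).

(* (Z, W) is a valid conditional instrumental set relative to (x, y) in G;
   the standing pairwise-disjointness of {x,y}, Z, W is part of the notion. *)
Definition valid_cis (G : mgraph V) (x y : V) (Z W : {set V}) : Prop :=
  [/\ [&& [disjoint [set x; y] & Z], [disjoint [set x; y] & W]
         & [disjoint Z & W]],
      [disjoint (Z :|: W) & forb G x y],
      mconn G [set x] Z W &
      msep (tildeG G x y) [set y] Z W].
End ADMG.

From mathcomp Require Import all_boot.
Set Implicit Arguments. Unset Strict Implicit. Unset Printing Implicit Defensive.

(* Take an x-z walk that is open given W and does not return to x, and restrict
   W to its members other than the new instrument that are ancestors, in G~, of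
   y or of the new instrument.  If every collider of the walk is an ancestor of
   y in G~, keep z: the walk stays open, and a y-z walk of G~ that is open given
   the restricted set is, up to its first visit of z, inside an(y, z) and hence
   open given W.  Otherwise the first collider c that is not an ancestor of y
   lies in W and becomes the instrument.  A y-c walk of G~ open given the
   restricted set either enters c with an arrowhead, and then continues along
   the original walk to a y-z walk of G~ open given W, or leaves c by a tail,
   which makes c an ancestor of y or of another member of the restricted set;
   both are excluded by the choice of c and acyclicity. *)

Section Walks.
Variable V : finType.
Implicit Types (H : mgraph V) (T W : {set V}) (a u : V) (arr : bool)
  (s : seq (V * ekind)).

Fixpoint colliders_in T arr u s : bool :=
  if s is (v, k) :: s' then
    (arr && head_src k ==> (u \in T)) && colliders_in T (head_tgt k) v s'
  else true.

Fixpoint head_last arr s : bool :=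
  if s is (_, k) :: s' then head_last (head_tgt k) s' else arr.

Lemma walk_ok_cat H u s1 s2 :
  walk_ok H u (s1 ++ s2) = walk_ok H u s1 && walk_ok H (last u (unzip1 s1)) s2.
Proof. by elim: s1 u => [|[v k] s1 IH] u //=; rewrite IH andbA. Qed.

Lemma open_from_cat W arr u s1 s2 :
  open_from W arr u (s1 ++ s2) =
  open_from W arr u s1 && open_from W (head_last arr s1) (last u (unzip1 s1)) s2.
Proof. by elim: s1 arr u => [|[v k] s1 IH] arr u //=; rewrite IH andbA. Qed.

Lemma last_unzip1_cat a s1 s2 :
  last a (unzip1 (s1 ++ s2)) = last (last a (unzip1 s1)) (unzip1 s2).
Proof. by rewrite /unzip1 map_cat last_cat. Qed.

Lemma open_walkE W a s : a \notin W -> open_walk W a s = open_from W false a s.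
Proof. by case: s => [|[v k] s] //= ->. Qed.

Lemma open_from_suffix W arr u s1 s2 :
  open_from W arr u (s1 ++ s2) -> open_walk W (last u (unzip1 s1)) s2.
Proof.
by rewrite open_from_cat; case: s2 => [|[v k] s2] //= /and3P[_ _ ->].
Qed.

Lemma open_colliders_in W arr u s : open_from W arr u s -> colliders_in W arr u s.
Proof.
elim: s arr u => [|[v k] s IH] arr u //= /andP[hu hs].
by rewrite IH // andbT; case: (arr && head_src k) hu.
Qed.

Lemma colliders_inS T1 T2 arr u s :
  T1 \subset T2 -> colliders_in T1 arr u s -> colliders_in T2 arr u s.
Proof.
move=> /subsetP sT; elim: s arr u => [|[v k] s IH] arr u //= /andP[hu hs].
by rewrite IH // andbT; case: (arr && head_src k) hu => //; apply: sT.
Qed.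

Lemma open_from_sub W W' T arr u s :
  open_from W arr u s -> colliders_in T arr u s ->
  W :&: T \subset W' -> W' \subset W -> open_from W' arr u s.
Proof.
move=> + + /subsetP sWT /subsetP sW.
elim: s arr u => [|[v k] s IH] arr u //= /andP[ho1 ho2] /andP[hc1 hc2].
rewrite IH // andbT; case: (arr && head_src k) ho1 hc1 => /= ho1 hc1.
  by apply: sWT; rewrite inE ho1 hc1.
by apply: contra ho1; apply: sW.
Qed.

Lemma eq_open_from W1 W2 arr u s :
  {in belast u (unzip1 s), W1 =i W2} ->
  open_from W1 arr u s = open_from W2 arr u s.
Proof.
elim: s arr u => [|[v k] s IH] arr u //= eqW.
by rewrite (eqW u (mem_head _ _)) IH // => n hn; apply: eqW; rewrite inE hn orbT.
Qed.

Lemma split_colliders T arr u s :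
  colliders_in T arr u s \/
  exists s1 v k s2, [/\ s = s1 ++ (v, k) :: s2, colliders_in T arr u s1,
     head_last arr s1, head_src k & last u (unzip1 s1) \notin T].
Proof.
elim: s arr u => [|[v k] s IH] arr u /=; first by left.
have [/and3P[-> hk uT]|col_u] := boolP [&& arr, head_src k & u \notin T].
  by right; exists [::], v, k, s.
have {}col_u : arr && head_src k ==> (u \in T).
  by move: col_u; case: arr (head_src k) (u \in T) => [] [] [].
case: (IH (head_tgt k) v) => [|[s1 [v0 [k0 [s2 [-> h1 h2 h3 h4]]]]]].
  by left; rewrite col_u.
by right; exists ((v, k) :: s1), v0, k0, s2; rewrite /= col_u.
Qed.

Lemma walk_split_last_visit u a s : u \in a :: unzip1 s ->
  exists s1 s2, [/\ s = s1 ++ s2, last a (unzip1 s1) = u & u \notin unzip1 s2].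
Proof.
elim: s a => [|[v k] s IH] a; first by rewrite inE => /eqP ->; exists [::], [::].
have [/IH [s1 [s2 [-> l1 n2]]] _|nu] := boolP (u \in v :: unzip1 s).
  by exists ((v, k) :: s1), s2.
by rewrite /= inE (negbTE nu) orbF => /eqP <-; exists [::], ((v, k) :: s).
Qed.

Lemma walk_split_first_visit u a s : u \in a :: unzip1 s ->
  exists s1 s2, [/\ s = s1 ++ s2, last a (unzip1 s1) = u
                 & u \notin belast a (unzip1 s1)].
Proof.
elim: s a => [|[v k] s IH] a; first by rewrite inE => /eqP ->; exists [::], [::].
have [<- _|ne] := eqVneq a u; first by exists [::], ((v, k) :: s).
rewrite /= inE eq_sym (negbTE ne) /= => /IH [s1 [s2 [-> l1 n1]]].
by exists ((v, k) :: s1), s2; rewrite /= inE negb_or eq_sym ne.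
Qed.

(* In an ancestrally closed T, a walk whose colliders lie in T and whose ends
   lie in T unless reached by a tail, stays in T: from each node a directed
   path along the walk leads to a collider or to an end. *)
Lemma colliders_in_closed H T arr u s :
  (forall a b, dir H a b -> b \in T -> a \in T) -> walk_ok H u s ->
  colliders_in T arr u s -> (head_last arr s -> last u (unzip1 s) \in T) ->
  (~~ arr -> u \in T) -> {subset u :: unzip1 s <= T}.
Proof.
move=> closedT; elim: s arr u => [|[v k] s IH] arr u /=.
  by move=> _ _ hl hu n; rewrite inE => /eqP ->; case: arr hl hu => [->|_ ->].
move=> /andP[e w] /andP[c1 c2] hl hu.
have uT_head : head_src k -> u \in T.
  by case: arr c1 hu => /= [/implyP c1 _|_ hu _]; [exact: c1|exact: hu].
have sub_v := IH _ v w c2 hl.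
have [uT vT] : u \in T /\ {subset v :: unzip1 s <= T}.
  move: e uT_head sub_v {c1 c2 hl}; case: k => /= e uT_head sub_v.
  - have vT : {subset v :: unzip1 s <= T} by apply: sub_v.
    by split=> //; apply: closedT e (vT _ (mem_head _ _)).
  - have uT := uT_head isT; split=> //.
    by apply: sub_v => _; apply: closedT e uT.
  - by split; [apply: uT_head|apply: sub_v].
by move=> n; rewrite inE => /orP[/eqP ->|/vT].
Qed.
End Walks.

Section Ancestors.
Variable V : finType.
Implicit Types (G H : mgraph V) (A : {set V}) (x y u : V) (s : seq (V * ekind)).

Lemma an_setP H A u :
  reflect (exists2 v, v \in A & connect (dir H) u v) (u \in an_set H A).
Proof.
apply: (iffP bigcupP) => [[v vA]|[v vA uv]]; first by rewrite inE; exists v.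
by exists v; rewrite // inE.
Qed.

Lemma mem_an_set H A u : u \in A -> u \in an_set H A.
Proof. by move=> uA; apply/an_setP; exists u. Qed.

Lemma an_set_parent H A a b : dir H a b -> b \in an_set H A -> a \in an_set H A.
Proof.
move=> ab /an_setP[v vA bv]; apply/an_setP; exists v => //.
exact: connect_trans (connect1 ab) bv.
Qed.

Lemma connect_tilde G x y a b :
  connect (dir (tildeG G x y)) a b -> connect (dir G) a b.
Proof. by apply: connect_sub => u v /andP[uv _]; apply: connect1. Qed.

Lemma admg_connect_antisym G a b :
  is_admg G -> connect (dir G) a b -> connect (dir G) b a -> a = b.
Proof.
case=> acyclic _ _ /connectP[[|c p] /= path_p ->] // ca.
case/andP: path_p => ac path_p; have := acyclic _ _ ac.
by rewrite (connect_trans _ ca) //; apply/connectP; exists p.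
Qed.

Lemma walk_ok_tilde G x y u s :
  walk_ok G u s -> u != x -> x \notin unzip1 s -> walk_ok (tildeG G x y) u s.
Proof.
elim: s u => [|[v k] s IH] u //= /andP[e w] ux.
rewrite inE negb_or eq_sym => /andP[vx xs]; rewrite IH // andbT.
by case: k e => //= ->; rewrite ?(negbTE ux) ?(negbTE vx).
Qed.
End Ancestors.

Section Restriction.
Variables (V : finType) (G : mgraph V) (x y : V).
Implicit Types (W : {set V}) (t u : V) (arr : bool) (s q : seq (V * ekind)).
Local Notation Gt := (tildeG G x y).

Definition restrict_an W t : {set V} := (W :&: an_set Gt [set y; t]) :\ t.

Lemma restrict_an_sub W t : restrict_an W t \subset W.
Proof. by apply/subsetP => n; rewrite !inE => /and3P[]. Qed.

Lemma restrict_an_sub_an W t : restrict_an W t \subset an_set Gt [set y; t].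
Proof. by apply/subsetP => n; rewrite !inE => /and3P[]. Qed.

Lemma notin_restrict_an W t : t \notin restrict_an W t.
Proof. by rewrite !inE eqxx. Qed.

Lemma open_from_restrict_an W t arr u s :
  open_from W arr u s -> colliders_in (an Gt y) arr u s ->
  t \notin W :&: an Gt y -> open_from (restrict_an W t) arr u s.
Proof.
move=> open_s cols tWA; apply: open_from_sub open_s cols _ (restrict_an_sub W t).
apply/subsetP => n nWA; rewrite !inE; case/setIP: (nWA) => -> nA.
apply/and3P; split=> //; first by apply: contraNneq tWA => <-.
by apply/an_setP; exists y; rewrite ?inE ?eqxx //; move: nA; rewrite inE.
Qed.

(* Up to its first visit of t, an open walk from y given [restrict_an W t]
   stays in [an_set Gt [set y; t]], where the restriction is invisible. *)
Lemma open_from_unrestrict W t q :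
  walk_ok Gt y q -> open_from (restrict_an W t) false y q ->
  last y (unzip1 q) = t -> t \notin belast y (unzip1 q) -> open_from W false y q.
Proof.
move=> walk_q open_q last_q first_t.
set T := an_set Gt [set y; t].
have inT : {subset y :: unzip1 q <= T}.
  apply: colliders_in_closed walk_q _ _ _ => [a b|||].
  - exact: an_set_parent.
  - exact: colliders_inS (restrict_an_sub_an W t) (open_colliders_in open_q).
  - by rewrite last_q => _; apply: mem_an_set; rewrite !inE eqxx orbT.
  - by move=> _; apply: mem_an_set; rewrite !inE eqxx.
rewrite -(eq_open_from (W1 := restrict_an W t)) // => n nq.
have nt : n != t by apply: contraNneq first_t => <-.
by rewrite !inE nt inT ?andbT //; apply: mem_belast nq.
Qed.

Lemma msep_restrict_an W t : y \notin W ->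
  (forall q, walk_ok Gt y q -> open_from W false y q ->
     open_from (restrict_an W t) false y q -> last y (unzip1 q) = t -> False) ->
  msep Gt [set y] [set t] (restrict_an W t).
Proof.
move=> yW no_walk [a [q [/set1P -> walk_q /set1P last_q]]].
have yR : y \notin restrict_an W t.
  by apply: contra yW; apply/subsetP/restrict_an_sub.
rewrite open_walkE // => open_q.
have := mem_last y (unzip1 q); rewrite last_q.
case/walk_split_first_visit => q1 [q2 [eq_q last_q1 first_t]].
rewrite eq_q walk_ok_cat in walk_q; case/andP: walk_q => walk_q1 _.
rewrite eq_q open_from_cat in open_q; case/andP: open_q => open_q1 _.
apply: (no_walk q1) => //.
exact: open_from_unrestrict walk_q1 open_q1 last_q1 first_t.
Qed.

Lemma notin_an_restrict_an W t : is_admg G ->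
  t \notin an Gt y -> t \notin an_set Gt (y |: restrict_an W t).
Proof.
move=> admG tA; apply/an_setP => -[w]; rewrite !inE.
case/orP => [/eqP ->|/and3P[wt _ /an_setP[u uyt wu]]] tw.
  by rewrite inE tw in tA.
move: uyt wu; rewrite !inE => /orP[] /eqP -> wu.
  by rewrite inE (connect_trans tw wu) in tA.
have := admg_connect_antisym admG (connect_tilde tw) (connect_tilde wu).
by move=> eq_tw; rewrite eq_tw eqxx in wt.
Qed.
End Restriction.

Section Instrument.
Variables (V : finType) (G : mgraph V) (x y z : V) (W : {set V}).
Hypothesis valid : valid_cis G x y [set z] W.
Implicit Types (t : V) (s q : seq (V * ekind)).
Local Notation Gt := (tildeG G x y).

Lemma valid_cis_endpoints_notin : x \notin W /\ y \notin W.
Proof.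
case: valid => /and3P[_ dW _] _ _ _.
by rewrite !(disjointFr dW) // !inE eqxx ?orbT.
Qed.

Lemma valid_cis_candidate_notin t : t \in z |: W -> t \notin [set x; y].
Proof.
case: valid => /and3P[dz dW _] _ _ _ /setU1P[->|tW].
  by rewrite -disjoints1 disjoint_sym dz.
by rewrite (disjointFl dW tW).
Qed.

Lemma valid_cis_source_walk : exists s,
  [/\ walk_ok G x s, last x (unzip1 s) = z, open_from W false x s
    & x \notin unzip1 s].
Proof.
have [xW _] := valid_cis_endpoints_notin.
case: valid => _ _ [a [s [/set1P -> walk_s /set1P last_s]]].
rewrite open_walkE // => open_s _.
have [s1 [s2 [eq_s last_s1 xs2]]] :=
  walk_split_last_visit (mem_head x (unzip1 s)).
rewrite eq_s in walk_s last_s open_s; exists s2; split=> //.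
- by move: walk_s; rewrite walk_ok_cat last_s1 => /andP[].
- by rewrite -last_s last_unzip1_cat last_s1.
- by rewrite -open_walkE // -{1}last_s1; apply: open_from_suffix open_s.
Qed.

Lemma valid_cis_restrict_an t : t \in z |: W ->
  mconn G [set x] [set t] (restrict_an G x y W t) ->
  msep Gt [set y] [set t] (restrict_an G x y W t) ->
  valid_cis G x y [set t] (restrict_an G x y W t).
Proof.
move=> tzW conn sep; case: valid => /and3P[_ dW _] dF _ _.
have sub_zW : [set t] :|: restrict_an G x y W t \subset z |: W.
  rewrite subUset sub1set tzW.
  by rewrite (subset_trans (restrict_an_sub _ _ _ _ _)) ?subsetUr.
split=> //; last exact: disjointWl dF.
rewrite disjoint_sym disjoints1 valid_cis_candidate_notin //.
by rewrite disjoints1 notin_restrict_an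
   (disjointWr (restrict_an_sub _ _ _ _ _) dW).
Qed.

Lemma valid_cis_restrict_an_instrument s :
  walk_ok G x s -> last x (unzip1 s) = z -> open_from W false x s ->
  colliders_in (an Gt y) false x s ->
  valid_cis G x y [set z] (restrict_an G x y W z).
Proof.
move=> walk_s last_s open_s cols.
have [xW yW] := valid_cis_endpoints_notin.
have zW : z \notin W by case: valid => /and3P[_ _]; rewrite disjoints1.
apply: valid_cis_restrict_an; first exact: setU11.
  exists x, s; rewrite !inE last_s eqxx open_walkE; last first.
    by apply: contra xW; apply/subsetP/restrict_an_sub.
  by split=> //; apply: open_from_restrict_an; rewrite // in_setI (negbTE zW).
apply: msep_restrict_an => // q walk_q open_q _ last_q.
by case: valid => _ _ _; apply; exists y, q; rewrite open_walkE // !inE last_q.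
Qed.

Lemma valid_cis_restrict_an_collider s1 v k s2 :
  is_admg G -> walk_ok G x (s1 ++ (v, k) :: s2) ->
  last x (unzip1 (s1 ++ (v, k) :: s2)) = z ->
  open_from W false x (s1 ++ (v, k) :: s2) ->
  x \notin unzip1 (s1 ++ (v, k) :: s2) ->
  colliders_in (an Gt y) false x s1 -> head_last false s1 -> head_src k ->
  last x (unzip1 s1) \notin an Gt y ->
  valid_cis G x y [set last x (unzip1 s1)]
    (restrict_an G x y W (last x (unzip1 s1))).
Proof.
set c := last x (unzip1 s1).
move=> admG walk_s last_s open_s xs cols1 head1 hk cA.
have [xW yW] := valid_cis_endpoints_notin.
move: walk_s; rewrite walk_ok_cat => /andP[walk1 walk2].
move: open_s; rewrite open_from_cat head1 /= hk => /and3P[open1 cW open2].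
have cx : c != x by apply: contraNneq xW => <-.
apply: valid_cis_restrict_an; first exact: setU1r.
  exists x, s1; rewrite !inE eqxx open_walkE; last first.
    by apply: contra xW; apply/subsetP/restrict_an_sub.
  split=> //; apply: open_from_restrict_an => //.
  by rewrite in_setI (negbTE cA) andbF.
apply: msep_restrict_an => // q walk_q open_q openR_q last_q.
have [head_q|tail_q] := boolP (head_last false q).
  (* then c is a collider in W on the concatenated walk y ~ c ~ z *)
  case: valid => _ _ _; apply; exists y, (q ++ (v, k) :: s2); split.
  - exact: set11.
  - rewrite walk_ok_cat walk_q last_q; apply: walk_ok_tilde walk2 cx _.
    by apply: contra xs; rewrite /unzip1 map_cat mem_cat => ->; rewrite orbT.
  - by rewrite last_unzip1_cat last_q inE -last_s last_unzip1_cat.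
  - by rewrite open_walkE // open_from_cat open_q head_q last_q /= hk cW.
(* otherwise c is an ancestor of y or of a node of the restriction *)
have /negP := notin_an_restrict_an W admG cA; apply.
apply: (colliders_in_closed (arr := false) _ walk_q).
- exact: an_set_parent.
- apply: colliders_inS (open_colliders_in openR_q).
  by apply/subsetP => n nR; apply: mem_an_set; apply: setU1r.
- by rewrite (negbTE tail_q).
- by move=> _; apply: mem_an_set; apply: setU11.
- by rewrite -last_q mem_last.
Qed.
End Instrument.

Theorem mainTheorem7 (V : finType) (G : mgraph V) (x y : V) :
  is_admg G -> x != y ->
  ((exists (z : V) (W : {set V}), valid_cis G x y [set z] W) <->
   (exists (z' : V) (W' : {set V}),
      W' \subset an_set (tildeG G x y) [set y; z'] /\
      valid_cis G x y [set z'] W')).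
Proof.
move=> admG _; split=> [[z [W valid]]|[z' [W' [_ valid]]]]; last by exists z', W'.
have [s [walk_s last_s open_s xs]] := valid_cis_source_walk valid.
have [cols|[s1 [v [k [s2 [eq_s cols1 head1 hk cA]]]]]] :=
  split_colliders (an (tildeG G x y) y) false x s.
  exists z, (restrict_an G x y W z); split; first exact: restrict_an_sub_an.
  exact (valid_cis_restrict_an_instrument valid walk_s last_s open_s cols).
exists (last x (unzip1 s1)), (restrict_an G x y W (last x (unzip1 s1))).
split; first exact: restrict_an_sub_an.
rewrite eq_s in walk_s last_s open_s xs.
exact (valid_cis_restrict_an_collider valid admG walk_s last_s open_s xs
         cols1 head1 hk cA).
Qed.
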